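(* Let $\{p(\bm x,\bm\theta)\}$ be a regular parametric family on $\mathbb R^d$ with parameter $\bm\theta\in\mathbb R^m$, with Wasserstein scores $S^W_j$ and Wasserstein information matrix $G_W(\bm\theta)$ assumed invertible. Let $\hat{\bm\theta}:\mathbb R^d\to\mathbb R^m$ be a differentiable estimator with $\nabla_{\bm x}\hat\theta_i$ square integrable under $p(\cdot,\bm\theta)$, such that $\frac{\partial}{\partial\theta_j}\mathrm E_\theta[\hat\theta_i]=\int\hat\theta_i\,\partial_{\theta_j}p\,d\bm x$ and $\int\nabla_{\bm x}\cdot(\hat\theta_i\,p\,\nabla_{\bm x}S^W_j)\,d\bm x=0$ for all $i,j$. Then, in the positive semidefinite order, $$\mathrm{Var}^W_\theta[\hat{\bm\theta}]\succeq\Big(\tfrac{\partial}{\partial\theta}\mathrm E_\theta[\hat{\bm\theta}]\Big)^{\!\top}G_W(\bm\theta)^{-1}\Big(\tfrac{\partial}{\partial\theta}\mathrm E_\theta[\hat{\bm\theta}]\Big),$$ where $\big(\tfrac{\partial}{\partial\theta}\mathrm E_\theta[\hat{\bm\theta}]\big)_{ab}=\frac{\partial}{\partial\theta_b}\mathrm E_\theta[\hat\theta_a]$.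
   Context: The Wasserstein score $S^W_j(\bm x,\bm\theta)$ is the solution of $\nabla_{\bm x}\cdot(p(\bm x,\bm\theta)\nabla_{\bm x}S^W_j)=-\partial_{\theta_j}p(\bm x,\bm\theta)$ with $\mathrm E_\theta[S^W_j]=0$. The Wasserstein information matrix is $G_W(\bm\theta)_{ij}=\mathrm E_\theta[\nabla_{\bm x}S^W_i{}^\top\nabla_{\bm x}S^W_j]$. The Wasserstein covariance of $\hat{\bm\theta}$ is $\mathrm{Var}^W_\theta[\hat{\bm\theta}]_{ab}=\mathrm E_\theta[(\nabla_{\bm x}\hat\theta_a)^\top(\nabla_{\bm x}\hat\theta_b)]$. *)

From HB Require Import structures.
From mathcomp Require Import all_boot all_order all_algebra.
From mathcomp Require Import all_classical all_reals all_analysis.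

Set Implicit Arguments.
Unset Strict Implicit.
Unset Printing Implicit Defensive.

Import Order.TTheory GRing.Theory Num.Theory.
Import numFieldNormedType.Exports.
Local Open Scope classical_set_scope.
Local Open Scope ring_scope.

Section WassersteinDefs.
Variable R : realType.

Definition ebasis (n : nat) (k : 'I_n) : 'rV[R]_n := delta_mx 0 k.

Definition partial (n : nat) (f : 'rV[R]_n -> R) (k : 'I_n) (x : 'rV[R]_n) : R :=
  'D_(ebasis k) f x.

Definition grad (n : nat) (f : 'rV[R]_n -> R) (x : 'rV[R]_n) : 'rV[R]_n :=
  \row_k partial f k x.

Definition div (n : nat) (F : 'rV[R]_n -> 'rV[R]_n) (x : 'rV[R]_n) : R :=
  \sum_(k < n) partial (fun y => F y 0 k) k x.

Definition dotv (n : nat) (u v : 'rV[R]_n) : R := \sum_(k < n) u 0 k * v 0 k.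

Definition box (n : nat) (a b : 'rV[R]_n) : set 'rV[R]_n :=
  [set x | forall k, a 0 k < x 0 k <= b 0 k].

Definition boxes (n : nat) : set (set 'rV[R]_n) :=
  [set B | exists a b, B = box a b].

(* R^n with its Borel sigma-algebra (generated by the half-open boxes) *)
Definition Rn (n : nat) := g_sigma_algebraType (@boxes n).

(* mu is Lebesgue measure on R^n: it gives every box its volume
   (this characterizes Lebesgue measure on the Borel sets) *)
Definition is_lebesgue (n : nat) (mu : {measure set (Rn n) -> \bar R}) : Prop :=
  forall a b : 'rV[R]_n, (forall k, a 0 k <= b 0 k) ->
    mu (box a b) = (\prod_(k < n) (b 0 k - a 0 k))%:E.

Definition expect (d m : nat) (mu : {measure set (Rn d) -> \bar R})
  (p : 'rV[R]_d -> 'rV[R]_m -> R) (th : 'rV[R]_m) (f : 'rV[R]_d -> R) : R :=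
  Rintegral mu setT (fun x : Rn d => f x * p x th).

Definition WinfoMx (d m : nat) (mu : {measure set (Rn d) -> \bar R})
  (p : 'rV[R]_d -> 'rV[R]_m -> R) (th : 'rV[R]_m)
  (S : 'I_m -> 'rV[R]_d -> R) : 'M[R]_m :=
  \matrix_(i, j) expect mu p th (fun x => dotv (grad (S i) x) (grad (S j) x)).

Definition WVar (d m : nat) (mu : {measure set (Rn d) -> \bar R})
  (p : 'rV[R]_d -> 'rV[R]_m -> R) (th : 'rV[R]_m)
  (that : 'rV[R]_d -> 'rV[R]_m) : 'M[R]_m :=
  \matrix_(a, b) expect mu p th
     (fun x => dotv (grad (fun y => that y 0 a) x) (grad (fun y => that y 0 b) x)).

Definition dExpect (d m : nat) (mu : {measure set (Rn d) -> \bar R})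
  (p : 'rV[R]_d -> 'rV[R]_m -> R) (th : 'rV[R]_m)
  (that : 'rV[R]_d -> 'rV[R]_m) : 'M[R]_m :=
  \matrix_(a, b) 'D_(ebasis b) (fun t => expect mu p t (fun y => that y 0 a)) th.

Definition psd_ge (m : nat) (A B : 'M[R]_m) : Prop :=
  forall v : 'cV[R]_m, 0 <= (v^T *m (A - B) *m v) 0 0.

End WassersteinDefs.

Arguments ebasis {R n}.

From HB Require Import structures.
From mathcomp Require Import all_boot all_order all_algebra.
From mathcomp Require Import all_classical all_reals all_analysis.
From mathcomp Require Import lra ring measurable_realfun.
Set Implicit Arguments.
Unset Strict Implicit.
Unset Printing Implicit Defensive.

Import Order.TTheory GRing.Theory Num.Theory.
Import numFieldNormedType.Exports.
Local Open Scope classical_set_scope.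
Local Open Scope ring_scope.

(** Integrating the score equation against an estimator component and
    discarding the divergence term turns the derivative of its mean into
    the weighted inner product of gradients:
    [d/dth_j E[th_a] = E[grad th_a . grad S_j]].  Hence the block matrix
    [[Var^W, D], [D^T, G_W]] is the weighted Gram matrix of the family
    (grad th_1, ..., grad th_m, grad S_1, ..., grad S_m), so it is positive
    semidefinite, and so is its Schur complement [Var^W - D G_W^-1 D^T]. *)

Section VectorCalculus.
Variables (R : realType) (n : nat).
Implicit Types (a b : 'rV[R]_n).

Lemma dotvC a b : dotv a b = dotv b a.
Proof. by apply: eq_bigr => k _; rewrite mulrC. Qed.

Lemma dotvZr a b (c : R) : dotv a (c *: b) = c * dotv a b.
Proof. by rewrite /dotv mulr_sumr; apply: eq_bigr => k _; rewrite mxE mulrCA. Qed.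

Lemma dotv_ge0 a : 0 <= dotv a a.
Proof. by apply: sumr_ge0 => k _; rewrite -expr2 sqr_ge0. Qed.

Lemma normr_dotv_le a b : `|dotv a b| <= dotv a a + dotv b b.
Proof.
rewrite /dotv -big_split /=; apply: (le_trans (ler_norm_sum _ _ _)).
apply: ler_sum => k _; rewrite ler_norml; apply/andP; split; nra.
Qed.

Lemma differentiable_coord_fun q (F : 'rV[R]_n -> 'rV[R]_q) k x :
  differentiable F x -> differentiable (fun y => F y 0 k) x.
Proof. by move=> dF; exact: (differentiable_comp dF (differentiable_coord _ _ _)). Qed.

Lemma div_scale (t : 'rV[R]_n -> R) (F : 'rV[R]_n -> 'rV[R]_n) x :
  differentiable t x -> differentiable F x ->
  div (fun y => t y *: F y) x = t x * div F x + dotv (grad t x) (F x).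
Proof.
move=> dt dF; rewrite /div /dotv mulr_sumr -big_split; apply: eq_bigr => k _ /=.
have -> : (fun y => (t y *: F y) 0 k) = t * (fun y => F y 0 k).
  by apply/funext => y; rewrite !mxE.
rewrite /partial deriveM; last 2 first.
- exact: diff_derivable.
- exact/diff_derivable/differentiable_coord_fun.
by rewrite /grad !mxE /partial [X in _ + X]mulrC.
Qed.

End VectorCalculus.

Lemma Rintegral_grad_dotv_score (R : realType) (d : nat)
    (mu : {measure set (Rn R d) -> \bar R}) (f s w q : 'rV[R]_d -> R) :
  (forall x, differentiable f x) ->
  (forall x, differentiable (fun y => w y *: grad s y) x) ->
  (forall x, div (fun y => w y *: grad s y) x = - q x) ->
  mu.-integrable setT (fun x : Rn R d => (f x * q x)%:E) ->
  mu.-integrable setT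
    (fun x : Rn R d => (div (fun y => (f y * w y) *: grad s y) x)%:E) ->
  \int[mu]_(x in setT) div (fun y => (f y * w y) *: grad s y) x = 0 ->
  \int[mu]_(x in setT) (dotv (grad f x) (grad s x) * w x)
    = \int[mu]_(x in setT) (f x * q x).
Proof.
move=> df dflux score fq_int bdry_int bdry0.
have by_parts x : dotv (grad f x) (grad s x) * w x
    = div (fun y => (f y * w y) *: grad s y) x + f x * q x.
  have -> : (fun y => (f y * w y) *: grad s y) = (fun y => f y *: (w y *: grad s y)).
    by apply/funext => y; rewrite scalerA.
  by rewrite div_scale // score dotvZr; ring.
under eq_Rintegral do rewrite by_parts.
by rewrite RintegralD // bdry0 add0r.
Qed.

#[local] Hint Resolve measurableT : core.

Section WeightedGram.
Context (dT : measure_display) (T : measurableType dT) (R : realType)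
  (mu : {measure set T -> \bar R}).

Lemma Rintegral_sum (I : Type) (s : seq I) (h : I -> T -> R) :
  (forall i, mu.-integrable setT (EFin \o h i)) ->
  \int[mu]_(x in setT) (\sum_(i <- s) h i x)
    = \sum_(i <- s) \int[mu]_(x in setT) h i x.
Proof.
move=> h_int; elim: s => [|i s IH].
  under eq_Rintegral do rewrite big_nil.
  by rewrite big_nil Rintegral_cst ?mul0r.
under eq_Rintegral do rewrite big_cons.
rewrite big_cons RintegralD // ?IH //.
rewrite (_ : _ \o _ = (fun x => \sum_(i <- s) (h i x)%:E)); last first.
  by apply/funext => x /=; rewrite sumEFin.
by apply: (integrable_sum measurableT) => j _; exact: h_int.
Qed.

Lemma integrable_mull (c : R) (f : T -> R) :
  mu.-integrable setT (fun x => (f x)%:E) ->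
  mu.-integrable setT (fun x => (c * f x)%:E).
Proof.
move=> f_int; apply: (eq_integrable measurableT _ _ _ (integrableZl measurableT c f_int)).
by move=> x _ /=; rewrite EFinM.
Qed.

Variables (d : nat) (w : T -> R).
Hypotheses (w_ge0 : forall x, 0 <= w x) (w_meas : measurable_fun setT w).

Definition square_integrable (a : T -> 'rV[R]_d) : Prop :=
  (forall k, measurable_fun setT (fun x => a x 0 k)) /\
  mu.-integrable setT (fun x => (dotv (a x) (a x) * w x)%:E).

Lemma integrable_dotv (a b : T -> 'rV[R]_d) :
  square_integrable a -> square_integrable b ->
  mu.-integrable setT (fun x => (dotv (a x) (b x) * w x)%:E).
Proof.
move=> [a_meas a_int] [b_meas b_int].
apply: (le_integrable measurableT _ _ (integrableD measurableT a_int b_int)).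
  apply/measurable_EFinP/measurable_funM => //.
  by apply: measurable_sum => k; apply: measurable_funM.
move=> x _ /=; rewrite lee_fin -mulrDl normrM (ger0_norm (w_ge0 x)).
rewrite [X in _ <= X]ger0_norm ?mulr_ge0 ?addr_ge0 ?dotv_ge0 //.
by rewrite ler_wpM2r // normr_dotv_le.
Qed.

Definition crossGram n1 n2 (a : 'I_n1 -> T -> 'rV[R]_d) (b : 'I_n2 -> T -> 'rV[R]_d)
  : 'M[R]_(n1, n2) :=
  \matrix_(i, j) \int[mu]_(x in setT) (dotv (a i x) (b j x) * w x).

Lemma trmx_crossGram n1 n2 (a : 'I_n1 -> T -> 'rV[R]_d) (b : 'I_n2 -> T -> 'rV[R]_d) :
  (crossGram a b)^T = crossGram b a.
Proof.
by apply/matrixP => i j; rewrite !mxE; apply: eq_Rintegral => x _; rewrite dotvC.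
Qed.

Definition cat_family n1 n2 (a : 'I_n1 -> T -> 'rV[R]_d) (b : 'I_n2 -> T -> 'rV[R]_d)
  (k : 'I_(n1 + n2)) : T -> 'rV[R]_d :=
  match fintype.split k with inl i => a i | inr j => b j end.

Lemma crossGram_cat n1 n2 (a : 'I_n1 -> T -> 'rV[R]_d) (b : 'I_n2 -> T -> 'rV[R]_d) :
  crossGram (cat_family a b) (cat_family a b)
    = block_mx (crossGram a a) (crossGram a b) (crossGram b a) (crossGram b b).
Proof.
apply/matrixP => i j; rewrite /cat_family !mxE.
by case: (fintype.split i) => i'; rewrite !mxE; case: (fintype.split j) => j'; rewrite !mxE.
Qed.

Lemma crossGram_psd n (a : 'I_n -> T -> 'rV[R]_d) (u : 'cV[R]_n) :
  (forall i, square_integrable (a i)) -> 0 <= (u^T *m crossGram a a *m u) 0 0.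
Proof.
move=> a_L2.
have dot_int i j := integrable_dotv (a_L2 i) (a_L2 j).
pose c i j x := (u i 0 * u j 0) * (dotv (a i x) (a j x) * w x).
have -> : (u^T *m crossGram a a *m u) 0 0
    = \int[mu]_(x in setT) (\sum_j \sum_i c i j x).
  rewrite Rintegral_sum => [|j]; last first.
    rewrite (_ : _ \o _ = (fun x => \sum_i (c i j x)%:E)); last first.
      by apply/funext => x /=; rewrite sumEFin.
    by apply: (integrable_sum measurableT) => i _; apply: integrable_mull.
  rewrite mxE; apply: eq_bigr => j _.
  rewrite Rintegral_sum => [|i]; last exact: integrable_mull.
  rewrite mxE mulr_suml; apply: eq_bigr => i _.
  rewrite !mxE RintegralZl; [by rewrite mulrAC | by [] | exact: dot_int].
apply: Rintegral_ge0 => x _.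
pose v := \sum_i u i 0 *: a i x.
have -> : \sum_j \sum_i c i j x = dotv v v * w x.
  transitivity (\sum_j \sum_i \sum_k (u i 0 * a i x 0 k) * (u j 0 * a j x 0 k) * w x).
    apply: eq_bigr => j _; apply: eq_bigr => i _.
    rewrite /c /dotv mulr_suml mulr_sumr; apply: eq_bigr => k _; ring.
  under eq_bigr do rewrite exchange_big /=.
  rewrite exchange_big /= /dotv mulr_suml; apply: eq_bigr => k _.
  rewrite !summxE big_distrlr /= mulr_suml exchange_big /=; apply: eq_bigr => j _.
  by rewrite mulr_suml; apply: eq_bigr => i _; rewrite !mxE; ring.
by rewrite mulr_ge0 ?dotv_ge0.
Qed.

End WeightedGram.

(* [- G^-1 D^T v] minimises the block form in its second argument. *)
Lemma schur_complement_quadratic (R : comUnitRingType) m n (A : 'M[R]_m)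
    (D : 'M[R]_(m, n)) (G : 'M[R]_n) (v : 'cV[R]_m) :
  G^T = G -> G \in unitmx ->
  (col_mx v (- (invmx G *m D^T *m v)))^T *m block_mx A D D^T G
     *m col_mx v (- (invmx G *m D^T *m v))
  = v^T *m (A - D *m invmx G *m D^T) *m v.
Proof.
move=> GT G_unit; set Gi := invmx G.
have GiT : Gi^T = Gi by rewrite /Gi trmx_inv GT.
have GiG : v^T *m D *m Gi *m G = v^T *m D by rewrite -!mulmxA mulVmx ?mulmx1.
rewrite tr_col_mx mul_row_block mul_row_col !linearN /= !trmx_mul trmxK GiT.
rewrite !mulNmx !mulmxA GiG mulmxDl mulmxBr mulmxBl mulmxDl !mulNmx !mulmxA.
by rewrite subrr mul0mx subr0 mulmxBl.
Qed.

Lemma psd_ge_schur (R : realType) m n (A : 'M[R]_m) (D : 'M[R]_(m, n))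
    (G : 'M[R]_n) :
  G^T = G -> G \in unitmx ->
  (forall u : 'cV[R]_(m + n), 0 <= (u^T *m block_mx A D D^T G *m u) 0 0) ->
  psd_ge A (D *m invmx G *m D^T).
Proof. by move=> GT G_unit block_psd v; rewrite -schur_complement_quadratic. Qed.

Theorem mainTheorem7 (R : realType) (d m : nat)
  (mu : {measure set (Rn R d) -> \bar R}) (Hmu : is_lebesgue mu)
  (p : 'rV[R]_d -> 'rV[R]_m -> R) (th0 : 'rV[R]_m)
  (S : 'I_m -> 'rV[R]_d -> R) (that : 'rV[R]_d -> 'rV[R]_m)
  (* regular parametric family of densities *)
  (Hp0 : forall x th, 0 <= p x th)
  (Hp1 : forall th, mu.-integrable setT (fun x : Rn R d => (p x th)%:E) /\
                    Rintegral mu setT (fun x : Rn R d => p x th) = 1)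
  (Hpth : forall x j, derivable (p x) th0 (ebasis j))
  (* S j is the j-th Wasserstein score at th0 *)
  (HSdiff : forall j x, differentiable (S j) x)
  (HSflux : forall j x, differentiable (fun y => p y th0 *: grad (S j) y) x)
  (HSpde : forall j x, div (fun y => p y th0 *: grad (S j) y) x
                       = - 'D_(ebasis j) (p x) th0)
  (HSmean : forall j, mu.-integrable setT (fun x : Rn R d => (S j x * p x th0)%:E) /\
                      expect mu p th0 (S j) = 0)
  (HSmeas : forall j k, measurable_fun setT (fun x : Rn R d => partial (S j) k x))
  (HS2 : forall j, mu.-integrable setT
           (fun x : Rn R d => (dotv (grad (S j) x) (grad (S j) x) * p x th0)%:E))
  (HG : WinfoMx mu p th0 S \in unitmx)
  (* the estimator *)
  (Hthdiff : forall x, differentiable that x)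
  (Hthmeas : forall i k, measurable_fun setT
                (fun x : Rn R d => partial (fun y => that y 0 i) k x))
  (Hth2 : forall i, mu.-integrable setT
           (fun x : Rn R d => (dotv (grad (fun y => that y 0 i) x)
                                   (grad (fun y => that y 0 i) x) * p x th0)%:E))
  (HthE : forall i th, mu.-integrable setT (fun x : Rn R d => (that x 0 i * p x th)%:E))
  (Hswap : forall i j,
     mu.-integrable setT
       (fun x : Rn R d => (that x 0 i * 'D_(ebasis j) (p x) th0)%:E) /\
     derivable (fun t => expect mu p t (fun y => that y 0 i)) th0 (ebasis j) /\
     'D_(ebasis j) (fun t => expect mu p t (fun y => that y 0 i)) th0
       = Rintegral mu setT (fun x : Rn R d => that x 0 i * 'D_(ebasis j) (p x) th0))
  (Hbdry : forall i j,
     mu.-integrable setT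
       (fun x : Rn R d => (div (fun y => (that y 0 i * p y th0) *: grad (S j) y) x)%:E) /\
     Rintegral mu setT
       (fun x : Rn R d => div (fun y => (that y 0 i * p y th0) *: grad (S j) y) x) = 0) :
  psd_ge (WVar mu p th0 that)
    (dExpect mu p th0 that *m invmx (WinfoMx mu p th0 S) *m (dExpect mu p th0 that)^T).
Proof.
pose w x := p x th0.
pose grad_th a := grad (fun y => that y 0 a).
pose grad_S j := grad (S j).
have w_ge0 x : 0 <= w x := Hp0 x th0.
have w_meas : measurable_fun setT (w : Rn R d -> R).
  by apply/measurable_EFinP; exact: (measurable_int mu (Hp1 th0).1).
have grad_coord f k : (fun x => grad f x 0 k) = partial f k.
  by apply/funext => x; rewrite mxE.
have Var_gram : WVar mu p th0 that = crossGram mu w grad_th grad_th.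
  by apply/matrixP => a b; rewrite !mxE.
have G_gram : WinfoMx mu p th0 S = crossGram mu w grad_S grad_S.
  by apply/matrixP => i j; rewrite !mxE.
have D_gram : dExpect mu p th0 that = crossGram mu w grad_th grad_S.
  apply/matrixP => a b; rewrite !mxE (Hswap a b).2.2.
  have [bdry_int bdry0] := Hbdry a b.
  symmetry; apply: Rintegral_grad_dotv_score (Hswap a b).1 bdry_int bdry0 => // x.
  exact/differentiable_coord_fun/Hthdiff.
rewrite Var_gram G_gram D_gram; apply: psd_ge_schur.
- exact: trmx_crossGram.
- by rewrite -G_gram.
- move=> u; rewrite trmx_crossGram -crossGram_cat; apply: crossGram_psd => // k.
  rewrite /cat_family; case: (fintype.split k) => i; split=> [c|].
  + by rewrite grad_coord; exact: Hthmeas.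
  + exact: Hth2.
  + by rewrite grad_coord; exact: HSmeas.
  + exact: HS2.
Qed.
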